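(* Let $R$ be a semiprime ring, $I$ an ideal of $R$, and $c\in I$ an element that is regular in $I$ (i.e. for $s\in I$, $sc=0$ implies $s=0$ and $cs=0$ implies $s=0$). Let $M=\mathrm{ann}_R(I)$. Then (1) $\mathrm{l.ann}_R(c)=\mathrm{r.ann}_R(c)=M$, and (2) $\eta(c)$ is regular (neither a left nor a right zero divisor) in the factor ring $R/M$, where $\eta\colon R\to R/M$ is the canonical epimorphism.
   Context: For $A\subseteq R$: $\mathrm{l.ann}_R(A)=\{r\in R\mid rA=0\}$, $\mathrm{r.ann}_R(A)=\{r\in R\mid Ar=0\}$, $\mathrm{ann}_R(A)=\{r\in R\mid rA=Ar=0\}$. *)

From mathcomp Require Import all_boot all_algebra.
Set Implicit Arguments. Unset Strict Implicit. Unset Printing Implicit Defensive.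
Import GRing.Theory.
Local Open Scope ring_scope.

Definition is_ideal (R : pzRingType) (I : R -> Prop) : Prop :=
  I 0 /\ (forall x y, I x -> I y -> I (x - y)) /\
  (forall r x, I x -> I (r * x) /\ I (x * r)).

Definition nilpotent_ideal (R : pzRingType) (I : R -> Prop) : Prop :=
  exists n : nat, forall s : seq R, size s = n -> (forall x, x \in s -> I x) ->
    \prod_(x <- s) x = 0.

Definition semiprime (R : pzRingType) : Prop :=
  forall I : R -> Prop, is_ideal I -> nilpotent_ideal I -> forall x, I x -> x = 0.

Definition l_ann (R : pzRingType) (A : R -> Prop) : R -> Prop :=
  fun r => forall a, A a -> r * a = 0.
Definition r_ann (R : pzRingType) (A : R -> Prop) : R -> Prop :=
  fun r => forall a, A a -> a * r = 0.
Definition ann (R : pzRingType) (A : R -> Prop) : R -> Prop :=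
  fun r => forall a, A a -> r * a = 0 /\ a * r = 0.

Definition singl (R : pzRingType) (c : R) : R -> Prop := fun x => x = c.

Definition regular_in (R : pzRingType) (I : R -> Prop) (c : R) : Prop :=
  forall s, I s -> (s * c = 0 -> s = 0) /\ (c * s = 0 -> s = 0).

(* The factor ring R/M, represented via the canonical map eta : R -> R/M:
   eta x = eta y  iff  x - y \in M.  eta(c) is regular in R/M iff it is
   neither a left nor a right zero divisor there. *)
Definition eta_eq (R : pzRingType) (M : R -> Prop) (x y : R) : Prop := M (x - y).

Definition regular_mod (R : pzRingType) (M : R -> Prop) (c : R) : Prop :=
  forall r : R,
    (eta_eq M (c * r) 0 -> eta_eq M r 0) /\ (eta_eq M (r * c) 0 -> eta_eq M r 0).

From mathcomp Require Import all_boot all_algebra.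
Local Open Scope ring_scope.
Import GRing.Theory.

(* In a semiprime ring a one-sided annihilator of an ideal I is two-sided:
   if x s = 0 for all s in I, then (s x) u (s x) = s (x (u s)) x = 0 for all u,
   and an element y with y R y = 0 vanishes, as R y R is then an ideal of
   square zero.  For c regular in I, each of c x = 0, x c = 0, c r in ann I and
   r c in ann I forces a one-sided annihilation of I by regularity
   (e.g. (s x) c = 0 with s x in I gives s x = 0), hence membership in ann I. *)

Section Semiprime.

Variable R : pzRingType.

Definition principal_ideal (y : R) : R -> Prop :=
  fun z => exists s : seq (R * R), z = \sum_(p <- s) p.1 * y * p.2.

Lemma principal_ideal_is_ideal (y : R) : is_ideal (principal_ideal y).
Proof.
split; first by exists [::]; rewrite big_nil.
split.
  move=> a b [sa ->] [sb ->].
  exists (sa ++ map (fun p => (- p.1, p.2)) sb).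
  rewrite big_cat big_map /= -sumrN; congr (_ + _).
  by apply: eq_bigr => p _; rewrite !mulNr.
move=> r x [s ->]; split.
  exists (map (fun p => (r * p.1, p.2)) s).
  by rewrite big_map mulr_sumr; apply: eq_bigr => p _ /=; rewrite !mulrA.
exists (map (fun p => (p.1, p.2 * r)) s).
by rewrite big_map mulr_suml; apply: eq_bigr => p _ /=; rewrite !mulrA.
Qed.

Lemma principal_ideal_id (y : R) : principal_ideal y y.
Proof. by exists [:: (1, 1)]; rewrite big_seq1 /= mul1r mulr1. Qed.

Lemma principal_ideal_mul0 (y : R) : (forall u, y * u * y = 0) ->
  forall a b, principal_ideal y a -> principal_ideal y b -> a * b = 0.
Proof.
move=> yRy0 a b [sa ->] [sb ->].
rewrite mulr_suml; apply: big1 => p _; rewrite mulr_sumr; apply: big1 => q _.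
have -> : p.1 * y * p.2 * (q.1 * y * q.2) = p.1 * (y * (p.2 * q.1) * y) * q.2.
  by rewrite !mulrA.
by rewrite yRy0 mulr0 mul0r.
Qed.

Lemma principal_ideal_nilpotent (y : R) : (forall u, y * u * y = 0) ->
  nilpotent_ideal (principal_ideal y).
Proof.
move=> yRy0; exists 2%N => -[|a [|b [|? ?]]] //= _ sub_y.
rewrite big_cons big_seq1; apply: principal_ideal_mul0 => //; apply: sub_y.
  exact: mem_head.
by rewrite !inE eqxx orbT.
Qed.

Hypothesis semiprimeR : semiprime R.

Lemma semiprime_sandwich0 (y : R) : (forall u, y * u * y = 0) -> y = 0.
Proof.
move=> yRy0; apply: (semiprimeR _ (principal_ideal_is_ideal y)).
  exact: principal_ideal_nilpotent.
exact: principal_ideal_id.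
Qed.

Variable I : R -> Prop.
Hypothesis idealI : is_ideal I.

Lemma idealMl r {x} : I x -> I (r * x).
Proof. by case: idealI => _ [_ /(_ r x)] mulI /mulI []. Qed.

Lemma idealMr r {x} : I x -> I (x * r).
Proof. by case: idealI => _ [_ /(_ r x)] mulI /mulI []. Qed.

Lemma l_ann_ideal_ann x : l_ann I x -> ann I x.
Proof.
move=> xI0 s Is; split; first exact: xI0.
apply: semiprime_sandwich0 => u.
have -> : s * x * u * (s * x) = s * (x * (u * s)) * x by rewrite !mulrA.
by rewrite xI0 ?mulr0 ?mul0r //; apply: idealMl.
Qed.

Lemma r_ann_ideal_ann x : r_ann I x -> ann I x.
Proof.
move=> Ix0 s Is; split; last exact: Ix0.
apply: semiprime_sandwich0 => u.
have -> : x * s * u * (x * s) = x * ((s * u) * x) * s by rewrite !mulrA.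
by rewrite Ix0 ?mulr0 ?mul0r //; apply: idealMr.
Qed.

Variable c : R.
Hypotheses (Ic : I c) (regIc : regular_in I c).

Lemma l_ann_regular_ann x : l_ann (singl c) x <-> ann I x.
Proof.
split=> [/(_ c erefl) xc0 | /(_ c Ic) [xc0 _] _ -> //].
apply: r_ann_ideal_ann => s Is.
have [sxc0 _] := regIc _ (idealMr x Is); apply: sxc0.
by rewrite -mulrA xc0 mulr0.
Qed.

Lemma r_ann_regular_ann x : r_ann (singl c) x <-> ann I x.
Proof.
split=> [/(_ c erefl) cx0 | /(_ c Ic) [_ cx0] _ -> //].
apply: l_ann_ideal_ann => s Is.
have [_ cxs0] := regIc _ (idealMl x Is); apply: cxs0.
by rewrite mulrA cx0 mul0r.
Qed.

Lemma regular_mod_ann : regular_mod (ann I) c.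
Proof.
move=> r; rewrite /eta_eq !subr0; split=> crI.
  apply: l_ann_ideal_ann => s Is.
  have [_ crs0] := regIc _ (idealMl r Is); apply: crs0.
  by rewrite mulrA; case: (crI s Is).
apply: r_ann_ideal_ann => s Is.
have [src0 _] := regIc _ (idealMr r Is); apply: src0.
by rewrite -mulrA; case: (crI s Is).
Qed.

End Semiprime.

Theorem lemma1 (R : pzRingType) (I : R -> Prop) (c : R) :
  semiprime R -> is_ideal I -> I c -> regular_in I c ->
  (forall x, l_ann (singl c) x <-> ann I x) /\
  (forall x, r_ann (singl c) x <-> ann I x) /\
  regular_mod (ann I) c.
Proof.
move=> semiprimeR idealI Ic regIc; split; last split.
- exact: l_ann_regular_ann.
- exact: r_ann_regular_ann.
- exact: regular_mod_ann.
Qed.
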